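(* Let $n\ge1$, let $\lambda=(\lambda_1\ge\cdots\ge\lambda_n\ge0)$ be a partition (padded with zeros to length $n$), and set $A_{ij}=\lambda_i-\lambda_j+j-i$ for $1\le i<j\le n$. Then $$|\mathrm{SVT}(\lambda,n)|=|\mathrm{SST}(\lambda,n)|\cdot\sum_{k_1,\dots,k_n\ge0}\Big(\prod_{1\le i<j\le n}\frac{A_{ij}+k_i-k_j}{A_{ij}}\Big)\prod_{i=1}^n\frac{(-(i-1))_{k_i}}{(1)_{k_i}}(-1)^{k_i},$$ i.e. $|\mathrm{SVT}(\lambda,n)|=|\mathrm{SST}(\lambda,n)|\cdot F^{(n)}\big((A_{ij})\,|\,(0,-1,\dots,-(n-1))^T\,|\,(1,\dots,1)^T\,|\,(-1,\dots,-1)^T\big)$.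
   Context: $(a)_0=1$, $(a)_m=a(a+1)\cdots(a+m-1)$; the sum is finite since $(-(i-1))_{k_i}=0$ for $k_i>i-1$. Holman's function $F^{(n)}\big((A_{ij})\,|\,(a_{i})\,|\,(b_{i})\,|\,(z_i)\big)=\sum_{k_1,\dots,k_n\ge0}\prod_{i<j}\frac{A_{ij}+k_i-k_j}{A_{ij}}\prod_{i}\frac{(a_i)_{k_i}}{(b_i)_{k_i}}z_i^{k_i}$. $\mathrm{SST}(\lambda,n)$ is the set of semistandard tableaux of shape $\lambda$ with entries in $[n]=\{1,\dots,n\}$ (rows weakly increasing, columns strictly increasing), and $|\mathrm{SST}(\lambda,n)|=\prod_{1\le i<j\le n}\frac{\lambda_i-\lambda_j+j-i}{j-i}$. $\mathrm{SVT}(\lambda,n)$ is the set of set-valued tableaux of shape $\lambda$: each box $(i,j)$ of the Young diagram (row $i$ downward, column $j$ rightward) gets a nonempty $T_{i,j}\subseteq[n]$ with $\max T_{i,j}\le\min T_{i,j+1}$ and $\max T_{i,j}<\min T_{i+1,j}$ whenever these boxes exist. *)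

From HB Require Import structures.
From mathcomp Require Import all_boot all_order all_algebra.
Unset Printing Implicit Defensive.
Import Order.TTheory GRing.Theory Num.Theory.

(* Conventions: rows i and columns j are 0-indexed; row i has length
   nth 0 lam i; entries [n] = {1..n} are encoded by 'I_n (k <-> k+1),
   an order-preserving bijection. A filling is a function on the
   rectangle 'I_n * 'I_(lambda_1) which is "empty" outside the diagram. *)

Definition ncols (lam : seq nat) : nat := head 0%N lam.

Definition in_diag (lam : seq nat) (i j : nat) : bool := (j < nth 0%N lam i)%N.

Definition smax n (A : {set 'I_n}) : nat := \max_(x in A) (x : nat).
Definition smin n (A : {set 'I_n}) : nat := \big[minn/n]_(x in A) (x : nat).

Definition is_svt (lam : seq nat) (n : nat)
    (T : {ffun 'I_n * 'I_(ncols lam) -> {set 'I_n}}) : bool :=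
  [forall i : 'I_n, forall j : 'I_(ncols lam),
     [&& (in_diag lam i j ==> (T (i, j) != set0)),
         (~~ in_diag lam i j ==> (T (i, j) == set0)),
         [forall j' : 'I_(ncols lam),
            ((j'.+1 == j :> nat) && in_diag lam i j) ==>
              (smax n (T (i, j')) <= smin n (T (i, j)))%N] &
         [forall i' : 'I_n,
            ((i'.+1 == i :> nat) && in_diag lam i j) ==>
              (smax n (T (i', j)) < smin n (T (i, j)))%N]]].

Definition SVT (lam : seq nat) (n : nat) :=
  [set T : {ffun 'I_n * 'I_(ncols lam) -> {set 'I_n}} | is_svt lam n T].

Definition is_sst (lam : seq nat) (n : nat)
    (T : {ffun 'I_n * 'I_(ncols lam) -> option 'I_n}) : bool :=
  [forall i : 'I_n, forall j : 'I_(ncols lam),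
     [&& (in_diag lam i j ==> (T (i, j) != None)),
         (~~ in_diag lam i j ==> (T (i, j) == None)),
         [forall j' : 'I_(ncols lam),
            ((j'.+1 == j :> nat) && in_diag lam i j) ==>
              (odflt 0%N (omap val (T (i, j'))) <= odflt 0%N (omap val (T (i, j))))%N] &
         [forall i' : 'I_n,
            ((i'.+1 == i :> nat) && in_diag lam i j) ==>
              (odflt 0%N (omap val (T (i', j))) < odflt 0%N (omap val (T (i, j))))%N]]].

Definition SST (lam : seq nat) (n : nat) :=
  [set T : {ffun 'I_n * 'I_(ncols lam) -> option 'I_n} | is_sst lam n T].

Local Open Scope ring_scope.

Definition poch (a : rat) (m : nat) : rat := \prod_(t < m) (a + t%:R).

Definition Aij (lam : seq nat) (i j : nat) : rat :=
  ((nth 0%N lam i)%:Z - (nth 0%N lam j)%:Z + j%:Z - i%:Z)%:~R.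

Definition holman_term (lam : seq nat) (n : nat) (k : 'I_n -> nat) : rat :=
  (\prod_(i < n) \prod_(j < n | (i < j)%N)
     ((Aij lam i j + (k i)%:R - (k j)%:R) / Aij lam i j))
  * \prod_(i < n) (poch (- (i%:R)) (k i) / poch 1 (k i) * (-1) ^+ (k i)).

(* The sum over all k_1,..,k_n >= 0.  Its support is contained in
   {k | k_i <= i-1 (1-indexed)}, since (-(i-1))_{k_i} = 0 for k_i > i-1
   (this vanishing is the Pochhammer factor inside holman_term), so the
   sum over the finite box k_i < n is the full (finite) sum. *)
Definition holman_sum (lam : seq nat) (n : nat) : rat :=
  \sum_(k : {ffun 'I_n -> 'I_n}) holman_term lam n (fun i => (k i : nat)).

From mathcomp Require Import all_boot all_algebra ring zify.
Import GRing.Theory Num.Theory.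
Set Implicit Arguments. Unset Strict Implicit.

(* Tableaux with entries < m are counted by induction on m.  Deleting the
   largest entry leaves a tableau of a shape mu interlacing lam; the deleted
   entries fill the horizontal strip lam/mu and, in a set-valued tableau, may
   also join the last box of each row i of mu with mu_i > lam_(i+1).  Summing
   over mu row by row telescopes, so the count is +-det (G_s(i, x_i, j)) with
   x_i = lam_i + n - 1 - i and G_s(i, x, j) = sum_k s^k C(i, k) C(x + k, j),
   where s = 0 for SST and s = 1 for SVT.  For s = 0 this is c V(x), V the
   Vandermonde product; for s = 1 multilinearity in the rows gives
   sum_K prod_i C(i, K_i) c V(x + K).  Finally C(i, K_i) is the Pochhammer
   factor of Holman's summand and V(x + K) / V(x) its product over i < j. *)

Section Tableaux.
Variables (N C : nat) (sv : bool).

Definition filling := {ffun 'I_N * 'I_C -> {set 'I_N}}.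

(* Entries are bounded by [m], the induction parameter; [sv = false] allows
   at most one entry per box, i.e. semistandard tableaux. *)
Definition tableaub (lam : seq nat) (m : nat) (T : filling) : bool :=
  [&& [forall c : 'I_N * 'I_C, (T c != set0) == in_diag lam c.1 c.2],
   [forall i : 'I_N, forall j : 'I_C, forall j' : 'I_C,
     ((j'.+1 == j) && in_diag lam i j) ==>
       [forall x in T (i, j'), forall y in T (i, j), x <= y]],
   [forall i : 'I_N, forall i' : 'I_N, forall j : 'I_C,
     ((i'.+1 == i) && in_diag lam i j) ==>
       [forall x in T (i', j), forall y in T (i, j), x < y]],
   [forall c, forall x in T c, x < m] &
   (sv || [forall c, #|T c| <= 1])].

Record tableau lam m (T : filling) : Prop := Tableau {
  tab_support : forall c, (T c != set0) = in_diag lam c.1 c.2;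
  tab_row : forall (i : 'I_N) (j j' : 'I_C) (x y : 'I_N), j'.+1 = j ->
    in_diag lam i j -> x \in T (i, j') -> y \in T (i, j) -> x <= y;
  tab_col : forall (i i' : 'I_N) (j : 'I_C) (x y : 'I_N), i'.+1 = i ->
    in_diag lam i j -> x \in T (i', j) -> y \in T (i, j) -> x < y;
  tab_bound : forall c (x : 'I_N), x \in T c -> x < m;
  tab_single : ~~ sv -> forall c, #|T c| <= 1 }.

Lemma tableauP lam m T : reflect (tableau lam m T) (tableaub lam m T).
Proof.
apply: (iffP idP).
  case/and5P => /forallP h1 /forallP h2 /forallP h3 /forallP h4 h5; split.
  - by move=> c; have /eqP := h1 c.
  - move=> i j j' x y e d xT yT.
    move/forallP: (h2 i) => /(_ j) /forallP /(_ j') /implyP.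
    rewrite e eqxx d => /(_ isT) /forall_inP /(_ x xT) /forall_inP; exact.
  - move=> i i' j x y e d xT yT.
    move/forallP: (h3 i) => /(_ i') /forallP /(_ j) /implyP.
    rewrite e eqxx d => /(_ isT) /forall_inP /(_ x xT) /forall_inP; exact.
  - by move=> c x; move/forall_inP: (h4 c); apply.
  - by move=> nsv c; move: h5; rewrite (negbTE nsv) => /forallP.
case=> h1 h2 h3 h4 h5; apply/and5P; split.
- by apply/forallP => c; rewrite h1.
- apply/forallP => i; apply/forallP => j; apply/forallP => j'; apply/implyP.
  case/andP => /eqP e d; apply/forall_inP => x xT.
  by apply/forall_inP => y yT; apply: h2 xT yT.
- apply/forallP => i; apply/forallP => i'; apply/forallP => j; apply/implyP.
  case/andP => /eqP e d; apply/forall_inP => x xT.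
  by apply/forall_inP => y yT; apply: h3 xT yT.
- by apply/forallP => c; apply/forall_inP; apply: h4.
- by case: sv h5 => //= h5; apply/forallP; apply: h5.
Qed.

Definition tableaux lam m := [set T : filling | tableaub lam m T].

Definition nonincr (lam : seq nat) := forall i, nth 0 lam i.+1 <= nth 0 lam i.

Lemma nonincr_mono lam i i' : nonincr lam -> i <= i' -> nth 0 lam i' <= nth 0 lam i.
Proof.
move=> dec /subnKC <-; elim: (i' - i) => [|d IH]; first by rewrite addn0.
by rewrite addnS (leq_trans (dec _)).
Qed.

Lemma in_diagE lam i j : in_diag lam i j = (j < nth 0 lam i).
Proof. by []. Qed.

Section OneTableau.
Variables (lam : seq nat) (m : nat) (T : filling).
Hypotheses (tT : tableau lam m T) (dec : nonincr lam).

Lemma tab_in_diag (c : 'I_N * 'I_C) (x : 'I_N) : x \in T c -> in_diag lam c.1 c.2.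
Proof. by move=> xT; rewrite -(tab_support tT c); apply/set0Pn; exists x. Qed.

Lemma tab_diag_entry (c : 'I_N * 'I_C) : in_diag lam c.1 c.2 -> exists x, x \in T c.
Proof. by rewrite -(tab_support tT c) => /set0Pn. Qed.

Lemma tab_row_le (i : 'I_N) (j0 j : 'I_C) x y :
  j0 < j -> x \in T (i, j0) -> y \in T (i, j) -> x <= y.
Proof.
move Hd: (j - j0.+1) => d; elim: d j0 Hd x => [|d IH] j0 Hd x lt xT yT.
  have dj := tab_in_diag yT.
  by apply: (tab_row tT _ dj xT yT); rewrite /=; lia.
have lt1 : j0.+1 < C by apply: leq_trans (ltn_ord j); lia.
pose j1 := Ordinal lt1.
have dj1 : in_diag lam (i, j1).1 (i, j1).2.
  by move: (tab_in_diag yT); rewrite !in_diagE /=; lia.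
have [z zT] := tab_diag_entry dj1.
have xz : x <= z by apply: (tab_row tT _ dj1 xT zT).
apply: (leq_trans xz); apply: (IH j1) => //=; lia.
Qed.

Lemma tab_entry_ge_row (i : 'I_N) (j : 'I_C) x : x \in T (i, j) -> i <= x.
Proof.
move Hi: (i : nat) => k; elim: k i j x Hi => [|k IH] i j x Hi xT //.
have lt1 : k < N by apply: leq_trans (ltn_ord i); lia.
pose i0 := Ordinal lt1.
have dj0 : in_diag lam (i0, j).1 (i0, j).2.
  move: (tab_in_diag xT); rewrite !in_diagE /= Hi => h; exact: leq_trans h (dec _).
have [z zT] := tab_diag_entry dj0.
have := tab_col tT (i' := i0) (i := i) (j := j) _ (tab_in_diag xT) zT xT.
by have := IH i0 j z erefl zT; rewrite /= Hi; lia.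
Qed.

End OneTableau.

Lemma card_ord_lt k : k <= C -> #|[set j : 'I_C | j < k]| = k.
Proof.
move=> kC.
have -> : [set j : 'I_C | j < k] = [set widen_ord kC j | j in 'I_k].
  apply/setP => j; rewrite !inE; apply/idP/imsetP.
    by move=> jk; exists (Ordinal jk) => //; apply: val_inj.
  by case=> j0 _ ->; rewrite /= ltn_ord.
by rewrite card_imset ?card_ord // => a b /(congr1 val) e; apply: val_inj.
Qed.

Lemma down_closedE (S : {set 'I_C}) :
  (forall j j0 : 'I_C, j \in S -> j0 < j -> j0 \in S) ->
  forall j, (j \in S) = (j < #|S|).
Proof.
move=> dc j; apply/idP/idP => h.
  have sub : [set j0 : 'I_C | j0 < j.+1] \subset S.
    apply/subsetP => j0; rewrite inE ltnS leq_eqVlt => /orP [/eqP e|lt].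
      by rewrite (_ : j0 = j) //; apply: val_inj.
    exact: dc h lt.
  by have := subset_leq_card sub; rewrite card_ord_lt.
apply: contraLR h => nj; rewrite -leqNgt.
have sub : S \subset [set j0 : 'I_C | j0 < j].
  apply/subsetP => j0 j0S; rewrite inE ltnNge; apply/negP => jj0.
  move: jj0; rewrite leq_eqVlt => /orP [/eqP e|lt].
    by move: nj; rewrite (_ : j = j0) ?j0S //; apply: val_inj.
  by move: nj; rewrite (dc j0 j j0S lt).
by have := subset_leq_card sub; rewrite card_ord_lt // ltnW.
Qed.

Definition row_support m (T : filling) (i : 'I_N) : {set 'I_C} :=
  [set j : 'I_C | [exists x in T (i, j), x < m]].

Definition shape_below m (mN : m <= N) (T : filling) : {ffun 'I_m -> 'I_C.+1} :=
  [ffun i => inord #|row_support m T (widen_ord mN i)|].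

Definition shape_seq m (Y : {ffun 'I_m -> 'I_C.+1}) : seq nat :=
  [seq (Y i : nat) | i <- enum 'I_m].

Lemma nth_shape_seq m (Y : {ffun 'I_m -> 'I_C.+1}) (i : 'I_m) :
  nth 0 (shape_seq Y) i = Y i.
Proof. by rewrite /shape_seq (nth_map i) ?nth_ord_enum // size_enum_ord. Qed.

Lemma nth_shape_seq_ge m (Y : {ffun 'I_m -> 'I_C.+1}) i :
  m <= i -> nth 0 (shape_seq Y) i = 0.
Proof. by move=> h; rewrite nth_default // size_map size_enum_ord. Qed.

Definition interlace lam m (i : 'I_m) (y : 'I_C.+1) : bool :=
  nth 0 lam i.+1 <= y <= nth 0 lam i.

Lemma row_support_sub lam m m' T (i : 'I_N) : tableau lam m' T ->
  row_support m T i \subset [set j : 'I_C | j < nth 0 lam i].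
Proof.
move=> tT; apply/subsetP => j; rewrite !inE => /existsP [x /andP [xT _]].
exact: (tab_in_diag tT xT).
Qed.

Lemma row_support_prefix lam m m' T (i : 'I_N) : tableau lam m' T -> nonincr lam ->
  forall j, (j \in row_support m T i) = (j < #|row_support m T i|).
Proof.
move=> tT dec; apply: down_closedE => j j0.
rewrite !inE => /existsP [x /andP [xT xm]] lt.
have dj0 : in_diag lam (i, j0).1 (i, j0).2.
  by move: (tab_in_diag tT xT); rewrite !in_diagE /=; lia.
have [z zT] := tab_diag_entry tT dj0.
apply/existsP; exists z; rewrite zT /=.
by have := tab_row_le tT lt zT xT; lia.
Qed.

Section Recursion.
Variables (lam : seq nat) (m : nat) (mN : m < N).
Hypotheses (dec : nonincr lam) (lam0C : nth 0 lam 0 <= C)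
  (lam_ge : forall i, m < i -> nth 0 lam i = 0).

Let mNw := ltnW mN.

Lemma lam_le_C i : nth 0 lam i <= C.
Proof. by apply: leq_trans lam0C; apply: nonincr_mono. Qed.

Lemma card_row_support_le m' T (i : 'I_N) : tableau lam m' T ->
  #|row_support m T i| <= nth 0 lam i.
Proof.
move=> tT; apply: leq_trans (subset_leq_card (row_support_sub m i tT)) _.
by rewrite card_ord_lt ?lam_le_C.
Qed.

Lemma shape_below_interlace T : tableau lam m.+1 T ->
  shape_below mNw T \in family (@interlace lam m).
Proof.
move=> tT; apply/familyP => i; rewrite /interlace ffunE.
set r := widen_ord mNw i.
have rC : #|row_support m T r| <= C by apply: leq_trans (card_row_support_le _ tT) (lam_le_C _).
rewrite unfold_in /= inordK ?ltnS // (card_row_support_le _ tT) andbT.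
have i1N : i.+1 < N by apply: leq_trans mN; rewrite ltnS.
pose r1 := Ordinal i1N.
have sub : [set j : 'I_C | j < nth 0 lam i.+1] \subset row_support m T r.
  apply/subsetP => j; rewrite !inE => jl.
  have [z zT] := tab_diag_entry tT (c := (r1, j)) jl.
  have dj : in_diag lam (r, j).1 (r, j).2 by rewrite in_diagE /=; have := dec i; lia.
  have [x xT] := tab_diag_entry tT dj.
  apply/existsP; exists x; rewrite xT /=.
  have := tab_col tT (i := r1) (i' := r) (j := j) erefl jl xT zT.
  have := tab_bound tT zT; lia.
by have := subset_leq_card sub; rewrite card_ord_lt ?lam_le_C.
Qed.

Section Fiber.
Variable Y : {ffun 'I_m -> 'I_C.+1}.
Hypothesis Y_interlace : Y \in family (@interlace lam m).
Let mu := shape_seq Y.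

Lemma interlace_mu i : nth 0 lam i.+1 <= nth 0 mu i <= nth 0 lam i.
Proof.
case: (ltnP i m) => im; last by rewrite /mu nth_shape_seq_ge // lam_ge.
by move/familyP: Y_interlace => /(_ (Ordinal im)); rewrite /mu (nth_shape_seq Y (Ordinal im)).
Qed.

Lemma mu_le_lam i : nth 0 mu i <= nth 0 lam i.
Proof. by have := interlace_mu i; lia. Qed.

Lemma nonincr_mu : nonincr mu.
Proof. by move=> i; have := interlace_mu i; have := interlace_mu i.+1; lia. Qed.

Let new_entry : 'I_N := Ordinal mN.

(* The last box of row i of mu has no box of lam below it exactly in these
   rows, so only there may the new entry join it. *)
Definition addable_rows : {set 'I_N} := [set i : 'I_N | nth 0 lam i.+1 < nth 0 mu i].

Definition extra_rows : {set {set 'I_N}} :=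
  if sv then powerset addable_rows else [set set0].

Definition gets_new (E : {set 'I_N}) (c : 'I_N * 'I_C) : bool :=
  in_diag lam c.1 c.2 &&
  ((nth 0 mu c.1 <= c.2) || ((c.1 \in E) && (c.2.+1 == nth 0 mu c.1))).

Definition add_new (p : filling * {set 'I_N}) : filling :=
  [ffun c => p.1 c :|: (if gets_new p.2 c then [set new_entry] else set0)].

Definition add_new_dom := setX (tableaux mu m) extra_rows.

Lemma mem_add_new p c x :
  (x \in add_new p c) = (x \in p.1 c) || (gets_new p.2 c && (x == new_entry)).
Proof. by rewrite ffunE inE; case: (gets_new _ _); rewrite ?inE ?andbT ?andbF ?orbF. Qed.

Section Dom.
Variables (T : filling) (E : {set 'I_N}).
Hypothesis TE_dom : (T, E) \in add_new_dom.

Lemma dom_tableau : tableau mu m T.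
Proof. by move: TE_dom; rewrite inE /= => /andP [ ]; rewrite inE => /tableauP. Qed.

Lemma dom_addable i : i \in E -> nth 0 lam i.+1 < nth 0 mu i.
Proof.
move: TE_dom; rewrite inE /= /extra_rows => /andP [_].
case: sv; rewrite inE; last by move=> /eqP ->; rewrite inE.
by move=> /subsetP sub /sub; rewrite inE.
Qed.

Lemma dom_extra0 : ~~ sv -> E = set0.
Proof.
move=> nsv; move: TE_dom; rewrite inE /= => /andP [_].
by rewrite /extra_rows (negbTE nsv) inE => /eqP.
Qed.

Lemma add_new_le c x : x \in add_new (T, E) c -> x <= m.
Proof.
rewrite mem_add_new => /orP [xT|/andP [_ /eqP ->]] //.
exact/ltnW/(tab_bound dom_tableau xT).
Qed.

Lemma new_entry_notin c : new_entry \notin T c.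
Proof. by apply/negP => /(tab_bound dom_tableau); rewrite ltnn. Qed.

Lemma add_new_support c : (add_new (T, E) c != set0) = in_diag lam c.1 c.2.
Proof.
have tT := dom_tableau; case: c => i j /=.
case dm: (in_diag mu i j).
  have [x xT] := tab_diag_entry tT (c := (i, j)) dm.
  have -> : in_diag lam i j by move: dm; rewrite !in_diagE; have := mu_le_lam i; lia.
  by apply/set0Pn; exists x; rewrite mem_add_new xT.
have T0 : T (i, j) = set0.
  by apply/eqP; rewrite -[_ == _]negbK (tab_support tT (i, j)) /= dm.
rewrite ffunE T0 set0U /gets_new /=.
have -> : nth 0 mu i <= j by move: dm; rewrite in_diagE; lia.
rewrite orTb andbT; case: (in_diag _ _ _); last by rewrite eqxx.
by apply/set0Pn; exists new_entry; rewrite inE.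
Qed.

Lemma add_new_tableau : tableau lam m.+1 (add_new (T, E)).
Proof.
have tT := dom_tableau; split.
- exact: add_new_support.
- move=> i j j' x y e dj xT yT.
  move: yT; rewrite mem_add_new => /orP [yT|/andP [_ /eqP ->]]; last first.
    exact: (add_new_le xT).
  have dmj := tab_in_diag tT yT; rewrite /= in_diagE in dmj.
  move: xT; rewrite mem_add_new => /orP [xT|]; first exact: (tab_row tT e _ xT yT).
  rewrite /gets_new /= => /andP [/andP [_ h] _]; exfalso.
  by move: h => /orP [h|/andP [_ /eqP h]]; lia.
- move=> i i' j x y e dj xT yT.
  have l1 := interlace_mu i'; rewrite e in l1.
  have l2 := mu_le_lam i; rewrite in_diagE in dj.
  have no_new_above : ~~ gets_new E (i', j).
    rewrite /gets_new /= negb_and negb_or; apply/orP; right; apply/andP; split.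
      by rewrite -ltnNge; lia.
    apply/negP => /andP [iE /eqP h]; have := dom_addable iE; rewrite e; lia.
  move: xT; rewrite mem_add_new (negbTE no_new_above) orbF => xT.
  move: yT; rewrite mem_add_new => /orP [yT|/andP [_ /eqP ->]].
    by apply: (tab_col tT e _ xT yT); have := tab_in_diag tT yT.
  exact: (tab_bound tT xT).
- by move=> c x /add_new_le; rewrite ltnS.
- move=> nsv c; rewrite ffunE (dom_extra0 nsv) /gets_new in_set0 andFb orbF.
  case: c => i j /=.
  case h: (_ && _); last by rewrite setU0; apply: (tab_single tT nsv).
  have T0 : T (i, j) = set0.
    apply/eqP; rewrite -[_ == _]negbK (tab_support tT (i, j)) /= in_diagE.
    by move: h => /andP [_]; lia.
  by rewrite T0 set0U cards1.
Qed.

Lemma row_support_add_new (i : 'I_N) :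
  row_support m (add_new (T, E)) i = [set j : 'I_C | j < nth 0 mu i].
Proof.
have tT := dom_tableau; apply/setP => j; rewrite !inE; apply/existsP/idP.
  case=> x /andP []; rewrite mem_add_new => /orP [xT _|/andP [_ /eqP ->]].
    exact: (tab_in_diag tT xT).
  by rewrite /= ltnn.
move=> dj; have [x xT] := tab_diag_entry tT (c := (i, j)) dj.
by exists x; rewrite mem_add_new xT /= (tab_bound tT xT).
Qed.

Lemma shape_below_add_new : shape_below mNw (add_new (T, E)) = Y.
Proof.
apply/ffunP => i; rewrite ffunE row_support_add_new card_ord_lt; last first.
  exact: leq_trans (mu_le_lam _) (lam_le_C _).
by rewrite /mu nth_shape_seq inord_val.
Qed.

End Dom.

Definition new_rows (T : filling) : {set 'I_N} :=
  [set i : 'I_N | [exists j : 'I_C, (j.+1 == nth 0 mu i) && (new_entry \in T (i, j))]].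

Definition remove_new (T : filling) : filling * {set 'I_N} :=
  ([ffun c => T c :\ new_entry], new_rows T).

Lemma remove_add_new p : p \in add_new_dom -> remove_new (add_new p) = p.
Proof.
case: p => T E TE; congr (_, _).
  apply/ffunP => c; apply/setP => x; rewrite ffunE !inE mem_add_new.
  case: eqP => [->|_]; last by rewrite andbF orbF.
  by rewrite (negbTE (new_entry_notin TE c)).
apply/setP => i; rewrite inE; apply/existsP/idP.
  case=> j /andP [/eqP e]; rewrite mem_add_new (negbTE (new_entry_notin TE _)) /=.
  by rewrite /gets_new /= -e ltnn /= !eqxx !andbT => /andP [].
move=> iE; have := dom_addable TE iE => lt.
have jC : (nth 0 mu i).-1 < C by have := mu_le_lam i; have := lam_le_C i; lia.
have mu_pos : 0 < nth 0 mu i by lia.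
exists (Ordinal jC); rewrite /= mem_add_new /gets_new /= iE in_diagE prednK // eqxx.
by rewrite mu_le_lam orbT eqxx orbT.
Qed.

Section Inverse.
Variable T : filling.
Hypotheses (tT : tableau lam m.+1 T) (shT : shape_below mNw T = Y).

Lemma row_support_mu (r : 'I_N) (j : 'I_C) :
  (j \in row_support m T r) = (j < nth 0 mu r).
Proof.
case: (ltnP r m) => rm; last first.
  rewrite /mu nth_shape_seq_ge //= inE; apply/negbTE/existsP => -[x /andP [xT xm]].
  by have := tab_entry_ge_row tT dec xT; lia.
have : shape_below mNw T (Ordinal rm) = Y (Ordinal rm) by rewrite shT.
rewrite ffunE /= (_ : widen_ord mNw (Ordinal rm) = r); last exact: val_inj.
move=> h; rewrite /mu (nth_shape_seq Y (Ordinal rm)) /= -h.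
have rC : #|row_support m T r| <= C.
  exact: leq_trans (card_row_support_le _ tT) (lam_le_C _).
by rewrite inordK ?ltnS // (row_support_prefix _ _ tT dec).
Qed.

Lemma tab_le_new c (x : 'I_N) : x \in T c -> x <= m.
Proof. by move=> /(tab_bound tT); rewrite ltnS. Qed.

Lemma new_entry_gets_new c : (new_entry \in T c) = gets_new (new_rows T) c.
Proof.
case: c => i j; rewrite /gets_new /=; apply/idP/idP.
  move=> nT; rewrite (tab_in_diag tT nT) /=.
  case: (leqP (nth 0 mu i) j) => //= jm.
  have e : j.+1 = nth 0 mu i.
    case: (ltnP j.+1 (nth 0 mu i)) => h; last lia.
    have j1C : j.+1 < C by have := mu_le_lam i; have := lam_le_C i; lia.
    have : Ordinal j1C \in row_support m T i by rewrite row_support_mu.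
    rewrite inE => /existsP [z /andP [zT zm]].
    have := tab_row tT (j := Ordinal j1C) (j' := j) erefl _ nT zT.
    by rewrite in_diagE /= => /(_ (leq_trans h (mu_le_lam i))); lia.
  by rewrite e eqxx andbT inE; apply/existsP; exists j; rewrite nT e eqxx.
case/andP => dj /orP [h|/andP [iE /eqP e]].
  have [x xT] := tab_diag_entry tT (c := (i, j)) dj.
  suff -> : new_entry = x by [].
  apply: val_inj; apply/eqP; rewrite /= eqn_leq (tab_le_new xT) andbT leqNgt.
  apply/negP => xm; suff : j \in row_support m T i by rewrite row_support_mu ltnNge h.
  by rewrite inE; apply/existsP; exists x; rewrite xT.
move: iE; rewrite inE => /existsP [j0 /andP [/eqP e0 j0T]].
by rewrite (_ : j = j0) //; apply: val_inj; move: e e0 => /= <-; case.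
Qed.

Lemma add_remove_new : add_new (remove_new T) = T.
Proof.
apply/ffunP => c; apply/setP => x; rewrite mem_add_new /= ffunE !inE.
rewrite -new_entry_gets_new; case: (eqVneq x new_entry) => [->|_] /=.
  by rewrite andbT.
by rewrite andbF orbF.
Qed.

Lemma strip_new_tableau : tableau mu m (remove_new T).1.
Proof.
have mu_lam i j : in_diag mu i j -> in_diag lam i j.
  by rewrite !in_diagE; have := mu_le_lam i; lia.
have ne_new x : (x != new_entry) = (x != m :> nat) by rewrite -val_eqE.
split.
- move=> [i j] /=; rewrite in_diagE -row_support_mu inE ffunE.
  apply/set0Pn/existsP => -[x].
    move=> /setD1P [xm xT]; exists x; rewrite xT /=.
    by have := tab_le_new xT; move: xm; rewrite ne_new; lia.
  by move=> /andP [xT xm]; exists x; apply/setD1P; rewrite ne_new; split => //; lia.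
- move=> i j j' x y e /mu_lam dj; rewrite !ffunE !inE => /andP [_ xT] /andP [_ yT].
  exact: (tab_row tT e dj xT yT).
- move=> i i' j x y e /mu_lam dj; rewrite !ffunE !inE => /andP [_ xT] /andP [_ yT].
  exact: (tab_col tT e dj xT yT).
- move=> c x; rewrite ffunE !inE => /andP [xm xT].
  by have := tab_le_new xT; move: xm; rewrite ne_new; lia.
- move=> nsv c; rewrite ffunE; apply: leq_trans (tab_single tT nsv c).
  exact/subset_leq_card/subsetDl.
Qed.

Lemma new_rows_extra : new_rows T \in extra_rows.
Proof.
rewrite /extra_rows; case svE: sv; rewrite inE.
  apply/subsetP => i; rewrite !inE => /existsP [j /andP [/eqP e nT]].
  rewrite ltnNge; apply/negP => h.
  case: (ltnP i.+1 N) => iN; last by move: h; rewrite lam_ge -?e //; apply: leq_trans mN _.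
  have dj : in_diag lam (Ordinal iN) j by rewrite in_diagE /=; lia.
  have [z zT] := tab_diag_entry tT (c := (Ordinal iN, j)) dj.
  have := tab_col tT (i := Ordinal iN) (i' := i) (j := j) erefl dj nT zT.
  by have := tab_le_new zT; rewrite /=; lia.
apply/eqP/setP => i; rewrite !inE; apply/negbTE/existsP => -[j /andP [/eqP e nT]].
have : j \in row_support m T i by rewrite row_support_mu -e.
rewrite inE => /existsP [x /andP [xT xm]].
have : [set x; new_entry] \subset T (i, j) by apply/subsetP => z; rewrite !inE => /orP [] /eqP ->.
move=> /subset_leq_card; rewrite cards2 (_ : x != new_entry); last by rewrite -val_eqE /=; lia.
by move=> /leq_trans /(_ (tab_single tT (negbT svE) (i, j))).
Qed.

Lemma remove_new_dom : remove_new T \in add_new_dom.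
Proof. by rewrite inE /= new_rows_extra inE andbT; apply/tableauP/strip_new_tableau. Qed.

End Inverse.

Lemma card_shape_fiber :
  #|[set T in tableaux lam m.+1 | shape_below mNw T == Y]| =
  (if sv then 2 ^ #|addable_rows| else 1) * #|tableaux mu m|.
Proof.
have -> : [set T in tableaux lam m.+1 | shape_below mNw T == Y] = add_new @: add_new_dom.
  apply/setP => T; rewrite !inE; apply/andP/imsetP.
    case=> /tableauP tT /eqP shT.
    by exists (remove_new T); rewrite ?add_remove_new ?remove_new_dom.
  case=> [[T' E] TE ->]; split; first exact/tableauP/add_new_tableau.
  by rewrite shape_below_add_new.
rewrite card_in_imset; last exact: can_in_inj remove_add_new.
by rewrite /add_new_dom cardsX /extra_rows mulnC; case: sv; rewrite ?card_powerset ?cards1.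
Qed.

End Fiber.

Lemma card_tableaux_rec : #|tableaux lam m.+1| =
  \sum_(Y in family (@interlace lam m))
     (if sv then 2 ^ #|addable_rows Y| else 1) * #|tableaux (shape_seq Y) m|.
Proof.
rewrite -sum1_card (partition_big (shape_below mNw) (mem (family (@interlace lam m)))) /=.
  apply: eq_bigr => Y HY; rewrite -(card_shape_fiber HY) -sum1_card.
  by apply: eq_bigl => T; rewrite !inE.
by move=> T; rewrite inE => /tableauP tT; apply: shape_below_interlace.
Qed.

End Recursion.
End Tableaux.

Lemma nonincr_sorted (lam : seq nat) : sorted geq lam -> nonincr lam.
Proof.
elim: lam => [|a l IH] /= srt [|i] /=; rewrite ?nth_nil //.
  by case: l srt {IH} => //= b l /andP [].
exact: IH (path_sorted srt) i.
Qed.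

Section SetExtrema.
Variable n : nat.
Implicit Types (A : {set 'I_n}).

Lemma smax_ge A (x : 'I_n) : x \in A -> x <= smax n A.
Proof. by move=> xA; apply: (@leq_bigmax_cond _ (mem A) (fun x : 'I_n => x : nat)). Qed.

Lemma smin_le A (x : 'I_n) : x \in A -> smin n A <= x.
Proof.
move=> xA; rewrite /smin; have : x \in index_enum 'I_n by rewrite mem_index_enum.
elim: (index_enum _) => [|a r IH] //=; rewrite inE big_cons => /orP [/eqP e| xr].
  by rewrite -e xA; exact: geq_minl.
case: (a \in A); last exact: IH xr.
exact: leq_trans (geq_minr _ _) (IH xr).
Qed.

Lemma smin_geq A k : k <= n -> (forall y : 'I_n, y \in A -> k <= y) -> k <= smin n A.
Proof.
move=> kn h; apply: (big_ind (fun v => k <= v)) => // a b ka kb.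
by rewrite leq_min ka kb.
Qed.

Lemma smax_mem A : A != set0 -> exists2 x : 'I_n, x \in A & smax n A = x.
Proof.
rewrite -card_gt0 => /(@eq_bigmax_cond _ (mem A) (fun x : 'I_n => x : nat)) [x xA e].
by exists x.
Qed.

End SetExtrema.

Lemma is_svtE n lam (T : {ffun 'I_n * 'I_(ncols lam) -> {set 'I_n}}) :
  nonincr lam -> is_svt lam n T = tableaub true lam n T.
Proof.
move=> dec; apply/idP/tableauP => [svtT | tT].
  have cell i j := elimT forallP (elimT forallP svtT i) j.
  split=> [[i j]|i j j' x y e dj xT yT|i i' j x y e dj xT yT|c x _|] //=.
  - case/and4P: (cell i j) => din dout _ _.
    by case: (in_diag lam i j) din dout => /= [-> //|_ /eqP ->]; rewrite eqxx.
  - case/and4P: (cell i j) => _ _ /forallP /(_ j') + _; rewrite e eqxx dj /= => le.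
    exact: leq_trans (smax_ge xT) (leq_trans le (smin_le yT)).
  - case/and4P: (cell i j) => _ _ _ /forallP /(_ i'); rewrite e eqxx dj /= => lt.
    exact: leq_ltn_trans (smax_ge xT) (leq_trans lt (smin_le yT)).
apply/forallP => i; apply/forallP => j; apply/and4P; split.
- by apply/implyP => d; rewrite (tab_support tT (i, j)).
- by apply/implyP => nd; have := tab_support tT (i, j); rewrite /= (negbTE nd) => /negbFE.
- apply/forallP => j'; apply/implyP => /andP [/eqP e dj].
  apply/bigmax_leqP => x xT; apply: smin_geq; first exact: ltnW (ltn_ord x).
  by move=> y yT; apply: (tab_row tT e dj xT yT).
- apply/forallP => i'; apply/implyP => /andP [/eqP e dj].
  have dj' : in_diag lam (i', j).1 (i', j).2.
    by move: dj; rewrite !in_diagE /= -e; have := dec i'; lia.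
  have [x0 x0T] := tab_diag_entry tT dj'.
  have [x xT ->] := smax_mem (introT (set0Pn _) (ex_intro _ x0 x0T)).
  apply: smin_geq; first exact: ltn_ord x.
  by move=> y yT; apply: (tab_col tT e dj xT yT).
Qed.

Lemma card_SVT n lam : nonincr lam ->
  #|SVT lam n| = #|tableaux n (ncols lam) true lam n|.
Proof. by move=> dec; apply: eq_card => T; rewrite !inE is_svtE. Qed.

Definition set_of_option n (o : option 'I_n) : {set 'I_n} :=
  if o is Some x then [set x] else set0.

Definition set_filling n C (T : {ffun 'I_n * 'I_C -> option 'I_n}) : filling n C :=
  [ffun c => set_of_option (T c)].

Lemma mem_set_of_option n (o : option 'I_n) x : (x \in set_of_option o) = (o == Some x).
Proof. by case: o => [y|] /=; rewrite ?inE // eq_sym. Qed.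

Lemma set_of_option_eq0 n (o : option 'I_n) : (set_of_option o == set0) = (o == None).
Proof.
case: o => [y|] /=; rewrite ?eqxx //.
by apply/negbTE/set0Pn; exists y; rewrite inE.
Qed.

Lemma set_of_option_inj n : injective (@set_of_option n).
Proof.
move=> [x|] [y|] //= e; last 2 first.
- by move/setP: e => /(_ x); rewrite !inE eqxx.
- by move/setP: e => /(_ y); rewrite !inE eqxx.
by move/set1_inj: e ->.
Qed.

Lemma is_sstE n lam (T : {ffun 'I_n * 'I_(ncols lam) -> option 'I_n}) :
  nonincr lam -> is_sst lam n T = tableaub false lam n (set_filling T).
Proof.
move=> dec; apply/idP/tableauP => [sstT | tT].
  have cell i j := elimT forallP (elimT forallP sstT i) j.
  split=> [[i j]|i j j' x y e dj|i i' j x y e dj|c x _|_ c] /=; rewrite ?ffunE.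
  - case/and4P: (cell i j) => din dout _ _; rewrite set_of_option_eq0.
    by case: (in_diag lam i j) din dout => /= [-> //|_ /eqP ->]; rewrite eqxx.
  - rewrite !mem_set_of_option => /eqP xe /eqP ye.
    case/and4P: (cell i j) => _ _ /forallP /(_ j') + _.
    by rewrite e eqxx dj xe ye.
  - rewrite !mem_set_of_option => /eqP xe /eqP ye.
    case/and4P: (cell i j) => _ _ _ /forallP /(_ i').
    by rewrite e eqxx dj xe ye.
  - exact: ltn_ord.
  - by case: (T c) => [y|] /=; rewrite ?cards1 ?cards0.
have entry (c : 'I_n * 'I_(ncols lam)) : in_diag lam c.1 c.2 -> exists x, T c = Some x.
  rewrite -(tab_support tT c) ffunE set_of_option_eq0.
  by case: (T c) => [x|] // _; exists x.
have supp (c : 'I_n * 'I_(ncols lam)) : (T c != None) = in_diag lam c.1 c.2.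
  by rewrite -(tab_support tT c) ffunE set_of_option_eq0.
apply/forallP => i; apply/forallP => j; apply/and4P; split.
- by apply/implyP => d; rewrite (supp (i, j)).
- by apply/implyP => nd; have := supp (i, j); rewrite /= (negbTE nd) => /negbFE.
- apply/forallP => j'; apply/implyP => /andP [/eqP e dj].
  have dj' : in_diag lam (i, j').1 (i, j').2 by move: dj; rewrite !in_diagE /= -e; lia.
  have [x xe] := entry _ dj'; have [y ye] := entry (i, j) dj.
  by rewrite xe ye /=; apply: (tab_row tT e dj); rewrite ffunE mem_set_of_option ?xe ?ye.
- apply/forallP => i'; apply/implyP => /andP [/eqP e dj].
  have dj' : in_diag lam (i', j).1 (i', j).2.
    by move: dj; rewrite !in_diagE /= -e; have := dec i'; lia.
  have [x xe] := entry _ dj'; have [y ye] := entry (i, j) dj.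
  by rewrite xe ye /=; apply: (tab_col tT e dj); rewrite ffunE mem_set_of_option ?xe ?ye.
Qed.

Lemma card_SST n lam : nonincr lam ->
  #|SST lam n| = #|tableaux n (ncols lam) false lam n|.
Proof.
move=> dec; have set_filling_inj : injective (@set_filling n (ncols lam)).
  move=> T1 T2 e; apply/ffunP => c.
  by apply: set_of_option_inj; move/ffunP: e => /(_ c); rewrite !ffunE.
rewrite -(card_imset _ set_filling_inj); apply: eq_card => S.
rewrite inE; apply/imsetP/idP => [[T] | tS].
  by rewrite inE is_sstE // => ? ->.
have tS' := elimT (tableauP _ _ _ _) tS.
pose T : {ffun 'I_n * 'I_(ncols lam) -> option 'I_n} := [ffun c => [pick x in S c]].
suff ST : set_filling T = S by exists T; rewrite // inE is_sstE // ST.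
apply/ffunP => c; rewrite !ffunE; case: pickP => [x xS|none] /=.
  by apply/eqP; rewrite eqEcard sub1set xS cards1 (tab_single tS').
by apply/setP => y; rewrite inE none.
Qed.

Local Open Scope ring_scope.

Definition gbin (s : bool) (i x j : nat) : rat :=
  \sum_(k < i.+1) s%:R ^+ k * 'C(i, k)%:R * 'C(x + k, j)%:R.

Lemma gbin0 s i x : gbin s i x 0 = (1 + s%:R) ^+ i.
Proof.
rewrite addrC exprD1n /gbin; apply: eq_bigr => k _.
by rewrite bin0 mulr1 mulr_natr.
Qed.

Lemma gbin_false i x j : gbin false i x j = 'C(x, j)%:R.
Proof.
rewrite /gbin big_ord_recl /= expr0 bin0 addn0 !mul1r big1 ?addr0 // => k _.
by rewrite expr0n /= !mul0r.
Qed.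

Lemma gbin_true n i x j : (i < n)%N ->
  gbin true i x j = \sum_(k < n) 'C(i, k)%:R * 'C(x + k, j)%:R.
Proof.
move=> iN; rewrite /gbin (big_ord_widen n (fun k => 1 ^+ k * 'C(i, k)%:R * 'C(x + k, j)%:R)) //.
rewrite big_mkcond /=; apply: eq_bigr => k _.
by rewrite expr1n mul1r; case: ltnP => // ik; rewrite bin_small // mul0r.
Qed.

Lemma gbinS s i x j : gbin s i x j + s%:R * gbin s i x.+1 j = gbin s i.+1 x j.
Proof.
rewrite /gbin mulr_sumr big_ord_recl [in RHS]big_ord_recl /= !bin0 !addn0 -addrA.
congr (_ + _).
rewrite [X in X + _ = _](_ : _ = \sum_(k < i.+1)
   s%:R ^+ bump 0 k * 'C(i, bump 0 k)%:R * 'C(x + bump 0 k, j)%:R); last first.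
  by rewrite big_ord_recr /= /bump /= add1n bin_small // mulr0 mul0r addr0.
rewrite -big_split /=; apply: eq_bigr => k _.
by rewrite /bump /= !add1n binS natrD addnS -addSn exprS; ring.
Qed.

Lemma gbin_diff s i x j : gbin s i x.+1 j.+1 - gbin s i x j.+1 = gbin s i x j.
Proof.
rewrite /gbin -sumrB; apply: eq_bigr => k _.
by rewrite addSn binS natrD; ring.
Qed.

Lemma sum_gbin s i a b c j : (a <= b)%N ->
  \sum_(a <= y < b) gbin s i (y + c) j = gbin s i (b + c) j.+1 - gbin s i (a + c) j.+1.
Proof.
move=> ab; rewrite (telescope_sumr_eq (fun y => gbin s i (y + c) j.+1)) //.
by move=> k _; rewrite addSn gbin_diff.
Qed.

Lemma sum_weighted_gbin (s : bool) (i a b c j : nat) : (a <= b)%N ->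
  \sum_(a <= y < b.+1) (1 + s%:R * (a < y)%N%:R) * gbin s i (y + c) j =
  (1 + s%:R) * gbin s i (b + c).+1 j.+1 - gbin s i.+1 (a + c) j.+1.
Proof.
move=> ab; under eq_bigr do rewrite mulrDl mul1r.
rewrite big_split /= sum_gbin ?(leq_trans ab) // big_ltn ?ltnS // ltnn mulr0 mul0r add0r.
rewrite (eq_big_nat _ _ (F2 := fun y => s%:R * gbin s i (y + c) j)); last first.
  by move=> y /andP [ay _]; rewrite ay mulr1.
by rewrite -mulr_sumr sum_gbin // -gbinS addSn; ring.
Qed.

Lemma det_sum_rows m (J : finType) (Q : 'I_m -> pred J) (g : 'I_m -> J -> 'I_m -> rat) :
  \det (\matrix_(i, j) \sum_(y | Q i y) g i y j) =
  \sum_(Y in family Q) \det (\matrix_(i, j) g i (Y i) j).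
Proof.
rewrite /determinant.
under eq_bigr => s _.
  under eq_bigr do rewrite mxE.
  rewrite bigA_distr_big_dep mulr_sumr.
over.
rewrite exchange_big /=; apply: eq_bigr => Y _; apply: eq_bigr => s _.
by congr (_ * _); apply: eq_bigr => i _; rewrite mxE.
Qed.

Lemma det_scale_rows m (a : 'I_m -> rat) (b : 'I_m -> 'I_m -> rat) :
  \det (\matrix_(i, j) (a i * b i j)) = (\prod_i a i) * \det (\matrix_(i, j) b i j).
Proof.
rewrite /determinant mulr_sumr; apply: eq_bigr => s _; rewrite mulrCA -big_split.
by congr (_ * _); apply: eq_bigr => i _; rewrite !mxE.
Qed.

(* Row operations: subtract q times row i from row i+1 (bottom to top), then
   expand along the first column, which has become (1, 0, ..., 0). *)
Lemma det_shift_rows m (q : rat) (F : nat -> nat -> rat) :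
  (forall i, F i 0%N = q ^+ i) ->
  \det (\matrix_(i < m, j < m) (q * F i j.+1 - F i.+1 j.+1)) =
  (-1) ^+ m * \det (\matrix_(i < m.+1, j < m.+1) F i j).
Proof.
move=> F0; set M := \matrix_(i < m.+1, j < m.+1) F i j.
pose A : 'M[rat]_m.+1 := \matrix_(i, k) (if i == k then (if i == ord0 then 1 else -1)
   else if (k.+1 == i)%N then q else 0).
have detA : \det A = (-1) ^+ m.
  rewrite det_trig; last first.
    apply/forallP => i; apply/forallP => k; apply/implyP => ik.
    rewrite mxE ifF; last by apply/negbTE; rewrite -val_eqE /= neq_ltn ik.
    by rewrite ifF //; apply/negbTE/eqP; lia.
  rewrite big_ord_recl mxE eqxx mul1r (eq_bigr (fun _ => -1)).
    by rewrite prodr_const card_ord.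
  by move=> i _; rewrite mxE eqxx.
have AM0 : (A *m M) ord0 =1 M ord0.
  move=> j; rewrite mxE (bigD1 ord0) //= mxE eqxx mul1r big1 ?addr0 //.
  move=> k /negbTE kn0; rewrite mxE eq_sym kn0 /=.
  by case: (k : nat) => [|k'] //=; rewrite mul0r.
have AMS (i : 'I_m) (j : 'I_m.+1) : (A *m M) (lift ord0 i) j = q * F i j - F i.+1 j.
  rewrite mxE (bigD1 (lift ord0 i)) //= (bigD1 (widen_ord (leqnSn m) i)) /=; last first.
    by rewrite -val_eqE /= /bump /= add1n neq_ltn ltnSn.
  rewrite !mxE eqxx /= ifF; last first.
    by apply/negbTE; rewrite -val_eqE /= /bump /= add1n neq_ltn ltnSn orbT.
  rewrite /bump /= add1n eqxx big1 ?addr0; first by ring.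
  move=> k /andP [k1 k2]; rewrite mxE ifF; last by apply/negbTE; rewrite eq_sym.
  rewrite ifF ?mul0r //; apply/negbTE; apply: contra k2 => /eqP e.
  by rewrite -val_eqE /=; move: e; rewrite /= /bump /= add1n => -[->].
have detAM : \det (A *m M) = \det (row' ord0 (col' ord0 (A *m M))).
  rewrite (expand_det_col _ ord0) (bigD1 ord0) //= big1 ?addr0; last first.
    move=> i /negbTE in0.
    have [i' ->] : exists i' : 'I_m, i = lift ord0 i'.
      case: i in0 => [[|i'] Hi] // _; exists (Ordinal (Hi : (i' < m)%N)).
      by apply: val_inj; rewrite /= /bump /= add1n.
    by rewrite AMS /= !F0 -exprS subrr mul0r.
  by rewrite AM0 /M mxE F0 expr0 mul1r /cofactor addn0 expr0 mul1r.
rewrite -detA -det_mulmx detAM; congr (\det _); apply/matrixP => i j.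
by rewrite !mxE; have := AMS i (lift ord0 j); rewrite mxE => ->; rewrite lift0.
Qed.

Definition vdm n (x : 'I_n -> nat) : rat :=
  \prod_(i < n) \prod_(j < n | (i < j)%N) ((x j)%:R - (x i)%:R).

Lemma natr_falling (y j : nat) : \prod_(t < j) ((y%:R : rat) - t%:R) = (y ^_ j)%:R.
Proof.
elim: j => [|j IH]; first by rewrite big_ord0 ffactn0.
rewrite big_ord_recr /= IH ffactnSr natrM.
by case: (leqP j y) => jy; [rewrite natrB | rewrite ffact_small // !mul0r].
Qed.

Lemma natr_binomial (y j : nat) :
  'C(y, j)%:R = \prod_(t < j) ((y%:R : rat) - t%:R) / (j`!)%:R.
Proof. by rewrite natr_falling -bin_ffact natrM mulfK // pnatr_eq0 -lt0n fact_gt0. Qed.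

Definition binpoly (j : nat) : {poly rat} :=
  \prod_(t < j) ('X - (t%:R)%:P) * ((j`!)%:R^-1)%:P.

Lemma horner_binpoly j y : (binpoly j).[y%:R] = 'C(y, j)%:R.
Proof.
rewrite natr_binomial /binpoly hornerM hornerC horner_prod; congr (_ * _).
by apply: eq_bigr => t _; rewrite hornerXsubC.
Qed.

Lemma size_binpoly j : (size (binpoly j) <= j.+1)%N.
Proof.
rewrite /binpoly; apply: (leq_trans (size_polyMleq _ _)).
have size_prod : (size (\prod_(t < j) ('X - (t%:R)%:P) : {poly rat})%R <= j.+1)%N.
  elim: j => [|j IH]; first by rewrite big_ord0 size_poly1.
  rewrite big_ord_recr /=; apply: (leq_trans (size_polyMleq _ _)).
  by rewrite size_XsubC addn2.
apply: leq_trans _ size_prod.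
have := size_polyC_leq1 ((j`!)%:R^-1 : rat); set a := size _; set b := size _; lia.
Qed.

Definition binom_det_const m : rat := \det (\matrix_(e < m, j < m) (binpoly j)`_e).

(* The binomial matrix factors as a transposed Vandermonde matrix times the
   coefficient matrix of the polynomials binpoly j. *)
Lemma det_binomial m (y : 'I_m -> nat) :
  \det (\matrix_(i, j) 'C(y i, j)%:R) = binom_det_const m * vdm y.
Proof.
pose a : 'rV[rat]_m := \row_i (y i)%:R.
have -> : \matrix_(i, j) 'C(y i, j)%:R =
          (Vandermonde m a)^T *m \matrix_(e < m, j < m) (binpoly j)`_e.
  apply/matrixP => i j; rewrite !mxE -horner_binpoly.
  rewrite (horner_coef_wide _ (leq_trans (size_binpoly j) (ltn_ord j))).
  by apply: eq_bigr => e _; rewrite !mxE mulrC.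
rewrite det_mulmx det_tr det_Vandermonde mulrC; congr (_ * _).
by apply: eq_bigr => i _; apply: eq_bigr => j _; rewrite !mxE.
Qed.

Lemma poch_binomial (i k : nat) :
  poch (- (i%:R)) k / poch 1 k * (-1) ^+ k = 'C(i, k)%:R.
Proof.
rewrite natr_binomial /poch.
have -> : \prod_(t < k) (1 + t%:R) = (k`!)%:R :> rat.
  elim: k => [|k IH]; first by rewrite big_ord0.
  by rewrite big_ord_recr /= IH factS natrM -natr1 addrC mulrC.
have -> : (-1) ^+ k = \prod_(t < k) (-1 : rat) by rewrite prodr_const card_ord.
rewrite mulrAC -big_split /=.
by congr (_ / _); apply: eq_bigr => t _; ring.
Qed.

Lemma sum_ord_interval (C a b : nat) (F : nat -> rat) : (a <= b)%N -> (b <= C)%N ->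
  \sum_(y < C.+1 | (a <= y <= b)%N) F y = \sum_(a <= y < b.+1) F y.
Proof.
move=> ab bC; rewrite -(big_mkord (fun y => (a <= y <= b)%N) F).
by rewrite [RHS](big_nat_widenl _ 0) // [RHS](big_nat_widen _ _ C.+1).
Qed.

Lemma weight_addable_rows N C (lam : seq nat) m (mN : (m < N)%N) (sv : bool)
    (Y : {ffun 'I_m -> 'I_C.+1}) :
  ((if sv then 2 ^ #|addable_rows N lam Y| else 1)%N%:R : rat) =
  \prod_(i < m) (1 + sv%:R * (nth 0 lam i.+1 < Y i)%N%:R).
Proof.
case: sv => /=; last by rewrite big1 // => i _; rewrite mul0r addr0.
set S := [set i : 'I_m | (nth 0 lam i.+1 < Y i)%N].
have -> : addable_rows N lam Y = widen_ord (ltnW mN) @: S.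
  apply/setP => i; rewrite inE; apply/idP/imsetP.
    case: (ltnP i m) => im; last by rewrite nth_shape_seq_ge.
    by rewrite (nth_shape_seq Y (Ordinal im)) => h; exists (Ordinal im); rewrite ?inE //; apply: val_inj.
  by case=> i0; rewrite inE => h ->; rewrite /= (nth_shape_seq Y i0).
rewrite card_imset; last by move=> a b /(congr1 val) e; apply: val_inj.
rewrite natrX -prodr_const big_mkcond /=.
by apply: eq_bigr => i _; rewrite inE mul1r; case: (_ < _)%N.
Qed.

Lemma card_tableaux0 N C sv lam : (forall i, nth 0%N lam i = 0%N) ->
  #|tableaux N C sv lam 0| = 1%N.
Proof.
move=> lam0; rewrite -(cards1 ([ffun => set0] : filling N C)); apply: eq_card => T.
rewrite !inE; apply/tableauP/eqP => [tT|->].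
  apply/ffunP => c; apply/setP => x; rewrite ffunE inE.
  by apply/negbTE/negP => /(tab_bound tT).
split=> [c|i j j' x y _ _|i i' j x y _ _|c x|_ c]; rewrite ?ffunE ?inE //.
- by rewrite eqxx in_diagE lam0.
- by rewrite cards0.
Qed.

Theorem card_tableaux_det (N C : nat) (sv : bool) (m : nat) (lam : seq nat) :
  (m <= N)%N -> nonincr lam -> (nth 0 lam 0 <= C)%N ->
  (forall i, (m <= i)%N -> nth 0%N lam i = 0%N) ->
  (#|tableaux N C sv lam m|)%:R = (-1) ^+ 'C(m, 2) *
    \det (\matrix_(i < m, j < m) gbin sv i (nth 0 lam i + (m - i.+1))%N j).
Proof.
elim: m lam => [|m IH] lam mN dec lam0C lam_ge.
  by rewrite card_tableaux0 ?det_mx00 ?mulr1 // => i; apply: lam_ge.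
have lam_gt i : (m < i)%N -> nth 0%N lam i = 0%N by apply: lam_ge.
pose w i (y : nat) : rat := 1 + sv%:R * (nth 0 lam i.+1 < y)%N%:R.
rewrite (card_tableaux_rec sv mN dec lam0C lam_gt) natr_sum.
transitivity ((-1) ^+ 'C(m, 2) * \sum_(Y in family (@interlace C lam m))
   \det (\matrix_(i < m, j < m) (w i (Y i) * gbin sv i (Y i + (m - i.+1))%N j))).
  rewrite mulr_sumr; apply: eq_bigr => Y HY.
  rewrite natrM (weight_addable_rows _ mN) (IH _ (ltnW mN)); last first.
  - by move=> i; apply: nth_shape_seq_ge.
  - by have /andP [_ h] := interlace_mu lam_gt HY 0; apply: leq_trans h lam0C.
  - exact: (nonincr_mu mN lam0C lam_gt).
  rewrite det_scale_rows mulrCA; congr (_ * (_ * \det _)).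
  by apply/matrixP => i j; rewrite !mxE (nth_shape_seq Y i).
rewrite -(det_sum_rows (@interlace C lam m)
  (fun i (y : 'I_C.+1) (j : 'I_m) => w i y * gbin sv i (y + (m - i.+1))%N j)).
pose F i j := gbin sv i (nth 0 lam i + (m.+1 - i.+1))%N j.
transitivity ((-1) ^+ 'C(m, 2) *
  \det (\matrix_(i < m, j < m) ((1 + sv%:R) * F i j.+1 - F i.+1 j.+1))).
  congr (_ * \det _); apply/matrixP => i j; rewrite !mxE /interlace.
  rewrite (sum_ord_interval (fun y => w i y * gbin sv i (y + (m - i.+1))%N j) (dec i));
    last first.
    exact: leq_trans (nonincr_mono dec (leq0n _)) lam0C.
  rewrite sum_weighted_gbin ?dec // /F; congr (_ * gbin _ _ _ _ - gbin _ _ _ _).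
  by have := ltn_ord i; rewrite subSS; lia.
rewrite det_shift_rows; last by move=> i; rewrite /F gbin0.
by rewrite binS bin1 exprD mulrA.
Qed.

Definition shifted_shape n (lam : seq nat) (i : 'I_n) : nat := (nth 0%N lam i + (n - i.+1))%N.
Arguments shifted_shape : clear implicits.

Lemma AijE (lam : seq nat) (i j : nat) :
  Aij lam i j = (nth 0%N lam i)%:R - (nth 0%N lam j)%:R + j%:R - i%:R.
Proof. by rewrite /Aij !rmorphD !rmorphN /= !pmulrn. Qed.

(* A_ij = x_i - x_j for the shifted shape x, hence the Vandermonde ratio. *)
Lemma holman_termE n (lam : seq nat) (K : 'I_n -> nat) :
  holman_term lam n K =
  vdm (fun i => shifted_shape n lam i + K i)%N / vdm (shifted_shape n lam) *
  \prod_(i < n) 'C(i, K i)%:R.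
Proof.
rewrite /holman_term; congr (_ * _); last by apply: eq_bigr => i _; rewrite poch_binomial.
rewrite /vdm -prodf_div; apply: eq_bigr => i _; rewrite -prodf_div.
apply: eq_bigr => j ij; rewrite AijE /shifted_shape !natrD !natrB ?ltn_ord //.
rewrite -[X in X / _ = _]opprK -[X in _ / X = _]opprK invrN mulrNN.
by congr (_ / _); ring.
Qed.

Lemma vdm_shifted_neq0 n (lam : seq nat) : nonincr lam -> vdm (shifted_shape n lam) != 0.
Proof.
move=> dec; apply/prodf_neq0 => i _; apply/prodf_neq0 => j ij.
rewrite subr_eq0 eqr_nat /shifted_shape; apply/eqP => e.
by have := nonincr_mono dec (ltnW ij); have := ltn_ord j; have := ltn_ord i; lia.
Qed.

Lemma det_gbin_false n (x : 'I_n -> nat) :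
  \det (\matrix_(i < n, j < n) gbin false i (x i) j) = binom_det_const n * vdm x.
Proof.
by rewrite -det_binomial; congr (\det _); apply/matrixP => i j; rewrite !mxE gbin_false.
Qed.

Lemma det_gbin_true n (x : 'I_n -> nat) :
  \det (\matrix_(i < n, j < n) gbin true i (x i) j) =
  \sum_(K : {ffun 'I_n -> 'I_n})
     (\prod_(i < n) 'C(i, K i)%:R) * (binom_det_const n * vdm (fun i => x i + K i)%N).
Proof.
transitivity (\det (\matrix_(i < n, j < n)
  \sum_(k < n) ('C(i, k)%:R * 'C(x i + k, j)%:R : rat))).
  by congr (\det _); apply/matrixP => i j; rewrite !mxE (gbin_true _ _ (ltn_ord i)).
rewrite (det_sum_rows (fun _ _ => true) (fun i (k : 'I_n) j => 'C(i, k)%:R * 'C(x i + k, j)%:R)).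
rewrite (eq_bigl xpredT); last by move=> K; apply/familyP.
by apply: eq_bigr => K _; rewrite det_scale_rows -det_binomial.
Qed.

Theorem corollary3p8 (n : nat) (lam : seq nat) :
  (0 < n)%N -> size lam = n -> sorted geq lam ->
  ((#|SVT lam n|)%:R = (#|SST lam n|)%:R * holman_sum lam n :> rat)%R.
Proof.
move=> _ sz srt; have dec := nonincr_sorted srt.
have lam0C : (nth 0 lam 0 <= ncols lam)%N by case: lam {sz srt dec}.
have lam_ge i : (n <= i)%N -> nth 0%N lam i = 0%N by move=> h; rewrite nth_default // sz.
have vdm_neq0 := vdm_shifted_neq0 n dec.
rewrite card_SVT // card_SST // !(card_tableaux_det _ (leqnn n) dec lam0C lam_ge).
rewrite (det_gbin_false (shifted_shape n lam)) (det_gbin_true (shifted_shape n lam)).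
rewrite /holman_sum -mulrA; congr (_ * _); rewrite mulr_sumr; apply: eq_bigr => K _.
by rewrite holman_termE; field.
Qed.
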